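(* Let $G=\langle b\rangle\wr\langle a\rangle$ be the restricted wreath product of two infinite cyclic groups $\langle b\rangle\cong\langle a\rangle\cong\mathbb Z$ (so $G\cong\mathbb Z\wr\mathbb Z$). Then the bijection $f\colon\{a^n\mid n\in\mathbb N\}\to\mathbb N$, $a^n\mapsto n$, is an interpretation with parameters of $(\mathbb N,+,\times)$ in the group $(G,\cdot)$.
   Context: The restricted wreath product $\langle b\rangle\wr\langle a\rangle$ is the group $H\rtimes\langle a\rangle$ where $H$ is the free abelian group with basis $(a^{-k}ba^k)_{k\in\mathbb Z}$ and $a$ acts by conjugation shifting the basis. Groups are first-order structures in the language with one binary function symbol. An interpretation with parameters of $M$ in $N$ is a pair $(n,f)$, $f$ a surjection from a subset of $N^n$ onto $M$, such that for every $X\subseteq M^k$ definable in $M$ without parameters, the preimage of $X$ under the coordinatewise map $f^{\underline k}$ is definable in $N$ with parameters (equivalently: domain, kernel of $f$ and preimages of graphs of the basic operations of $M$ are definable with parameters). *)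

From Stdlib Require Import ZArith List Lia.
Import ListNotations.
Open Scope Z_scope.

(* Both languages involved, (G, .) and (N, +, x), consist only of binary
   function symbols; a signature is the type of its binary function symbols. *)

Inductive term (Sym : Type) : Type :=
| Var : nat -> term Sym
| App : Sym -> term Sym -> term Sym -> term Sym.
Arguments Var {Sym} _.
Arguments App {Sym} _ _ _.

Inductive formula (Sym : Type) : Type :=
| FEq  : term Sym -> term Sym -> formula Sym
| FNot : formula Sym -> formula Sym
| FAnd : formula Sym -> formula Sym -> formula Sym
| FOr  : formula Sym -> formula Sym -> formula Sym
| FImp : formula Sym -> formula Sym -> formula Sym
| FEx  : nat -> formula Sym -> formula Sym
| FAll : nat -> formula Sym -> formula Sym.
Arguments FEq {Sym} _ _.
Arguments FNot {Sym} _.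
Arguments FAnd {Sym} _ _.
Arguments FOr {Sym} _ _.
Arguments FImp {Sym} _ _.
Arguments FEx {Sym} _ _.
Arguments FAll {Sym} _ _.

Record structure (Sym : Type) : Type := MkStructure {
  carrier :> Type;
  interp : Sym -> carrier -> carrier -> carrier
}.
Arguments carrier {Sym} _.
Arguments interp {Sym} _ _ _ _.

Fixpoint eval {Sym : Type} (M : structure Sym) (v : nat -> carrier M)
  (t : term Sym) : carrier M :=
  match t with
  | Var n => v n
  | App s t1 t2 => interp M s (eval M v t1) (eval M v t2)
  end.

Definition upd {A : Type} (v : nat -> A) (n : nat) (x : A) : nat -> A :=
  fun i => if Nat.eqb i n then x else v i.

Fixpoint sat {Sym : Type} (M : structure Sym) (v : nat -> carrier M)
  (phi : formula Sym) : Prop :=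
  match phi with
  | FEq t1 t2 => eval M v t1 = eval M v t2
  | FNot p => ~ sat M v p
  | FAnd p q => sat M v p /\ sat M v q
  | FOr p q => sat M v p \/ sat M v q
  | FImp p q => sat M v p -> sat M v q
  | FEx n p => exists x, sat M (upd v n x) p
  | FAll n p => forall x, sat M (upd v n x) p
  end.

(** A k-ary relation on M is a predicate on lists (of length k) of elements.
    It is definable without parameters if some formula phi, with the tuple
    placed in variables 0..k-1, defines it. *)
Definition definable0 {Sym : Type} (M : structure Sym) (k : nat)
  (X : list (carrier M) -> Prop) : Prop :=
  exists phi : formula Sym,
    forall v : nat -> carrier M,
      X (map v (seq 0 k)) <-> sat M v phi.

(** Definable with parameters: the tuple in variables 0..k-1, the parameters
    ps in variables k..k+|ps|-1. *)
Definition definable_params {Sym : Type} (M : structure Sym) (k : nat)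
  (X : list (carrier M) -> Prop) : Prop :=
  exists (phi : formula Sym) (ps : list (carrier M)),
    forall v : nat -> carrier M,
      map v (seq k (length ps)) = ps ->
      (X (map v (seq 0 k)) <-> sat M v phi).

(** The i-th block of length n of a list (a point of N^(n k) viewed as a
    k-tuple of points of N^n). *)
Definition block {A : Type} (n i : nat) (xs : list A) : list A :=
  firstn n (skipn (i * n) xs).

(** The function f is given as a total function on lists;
    only its values on D matter. *)
Definition interpretation {SM SN : Type} (M : structure SM) (N : structure SN)
  (n : nat) (D : list (carrier N) -> Prop) (f : list (carrier N) -> carrier M)
  : Prop :=
  (forall x, D x -> length x = n) /\
  (forall m : carrier M, exists x, D x /\ f x = m) /\
  (forall (k : nat) (X : list (carrier M) -> Prop),
      definable0 M k X ->
      definable_params N (n * k)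
        (fun xs => (forall i, (i < k)%nat -> D (block n i xs)) /\
                   X (map (fun i => f (block n i xs)) (seq 0 k)))).

Inductive arith_sym : Type := APlus | ATimes.

Definition NatArith : structure arith_sym :=
  MkStructure arith_sym nat
    (fun s => match s with APlus => Nat.add | ATimes => Nat.mul end).

(* H = free abelian group with basis b_k = a^-k b a^k (k in Z): finitely
   supported functions Z -> Z (coefficient of b_k). *)
Definition fin_supp (h : Z -> Z) : Prop :=
  exists N : Z, forall k : Z, N < Z.abs k -> h k = 0.

Record Hgrp : Type := MkH { coef : Z -> Z; coef_supp : fin_supp coef }.

Lemma fin_supp_shift_add (h g : Z -> Z) (m : Z) :
  fin_supp h -> fin_supp g -> fin_supp (fun j => h j + g (j + m)).
Proof.
  intros [N1 H1] [N2 H2]. exists (Z.abs N1 + Z.abs N2 + Z.abs m).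
  intros k Hk. rewrite H1, H2 by lia. reflexivity.
Qed.

Lemma fin_supp_zero : fin_supp (fun _ => 0).
Proof. exists 0. reflexivity. Qed.

Lemma fin_supp_delta0 : fin_supp (fun k => if Z.eqb k 0 then 1 else 0).
Proof.
  exists 0. intros k Hk. destruct (Z.eqb_spec k 0); [lia | reflexivity].
Qed.

(* An element (h, m) stands for h * a^m.  Since a^m b_k a^-m = b_(k-m),
   (h a^m)(g a^n) = h (a^m g a^-m) a^(m+n), and the coefficient of b_j in
   a^m g a^-m is g(j+m). *)
Definition wr_mul (x y : Hgrp * Z) : Hgrp * Z :=
  (MkH (fun j => coef (fst x) j + coef (fst y) (j + snd x))
       (fin_supp_shift_add _ _ _ (coef_supp (fst x)) (coef_supp (fst y))),
   snd x + snd y).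

Inductive group_sym : Type := GMul.

Definition ZwrZ : structure group_sym :=
  MkStructure group_sym (Hgrp * Z)%type (fun _ => wr_mul).

Definition wr_one : Hgrp * Z := (MkH (fun _ => 0) fin_supp_zero, 0).
Definition wr_a : Hgrp * Z := (MkH (fun _ => 0) fin_supp_zero, 1).
Definition wr_b : Hgrp * Z := (MkH (fun k => if Z.eqb k 0 then 1 else 0) fin_supp_delta0, 0).

Definition wr_pow (x : Hgrp * Z) (n : nat) : Hgrp * Z :=
  Nat.iter n (fun y => wr_mul y x) wr_one.

Definition dom_apow (xs : list (Hgrp * Z)) : Prop :=
  exists n : nat, xs = [wr_pow wr_a n].

Definition f_apow (xs : list (Hgrp * Z)) : nat :=
  match xs with
  | [x] => Z.to_nat (snd x)
  | _ => 0%nat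
  end.

(* An element of G is a pair (h, k) standing for h a^k, where h lies in the
   base group H and is given by its finitely supported coordinates h_j on the
   basis b_j = a^-j b a^j.  With the parameters a and b we define in G:
   - H and <a> as the centralisers of b and of a;
   - divisibility m | n between a^m and a^n: some v in H makes v a^n commute
     with b a^m; soundness rests on the rigidity of finitely supported
     functions (no single unit jump along m Z);
   - the cyclic group <b>, and with it the domain {a^n | n >= 0}: b_n = u m
     with u in <b> and m_j = z_(j-1) - 2 z_j is solvable iff n >= 0, since
     otherwise z would double forever to the left;
   - on the domain: least common multiples from divisibility, squares from
     lcm(n, n + 1) = n (n + 1), products from (m + n)^2 = m^2 + 2 m n + n^2,
     while addition of exponents is the group law.
   Arithmetic formulas are then translated recursively, quantifiers being
   relativised to the domain, and the preimage of a definable relation is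
   defined by the translation together with the domain conditions. *)

From Stdlib Require Import ZArith Znumtheory List Lia Arith Bool
  FunctionalExtensionality ProofIrrelevance.
Import ListNotations.
Open Scope Z_scope.

Notation G := (Hgrp * Z)%type.

Lemma H_ext (x y : Hgrp) : (forall j, coef x j = coef y j) -> x = y.
Proof.
  destruct x as [cx px], y as [cy py]; cbn; intros E.
  assert (cx = cy) by (apply functional_extensionality; exact E); subst.
  f_equal; apply proof_irrelevance.
Qed.

Lemma G_ext (x y : G) :
  (forall j, coef (fst x) j = coef (fst y) j) -> snd x = snd y -> x = y.
Proof. destruct x, y; cbn; intros E1 E2; f_equal; auto using H_ext. Qed.

Lemma coef_mul (x y : G) (j : Z) :
  coef (fst (wr_mul x y)) j = coef (fst x) j + coef (fst y) (j + snd x).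
Proof. reflexivity. Qed.

Lemma snd_mul (x y : G) : snd (wr_mul x y) = snd x + snd y.
Proof. reflexivity. Qed.

(* Products are computed only through [coef_mul] and [snd_mul]. *)
Arguments wr_mul : simpl never.

Definition delta0 (j : Z) : Z := if j =? 0 then 1 else 0.

Lemma coef_b : coef (fst wr_b) = delta0.
Proof. reflexivity. Qed.

Lemma snd_b : snd wr_b = 0.
Proof. reflexivity. Qed.

Definition InA (x : G) : Prop := forall j, coef (fst x) j = 0.

Definition zeroH : Hgrp := MkH (fun _ => 0) fin_supp_zero.

Definition zpow (n : Z) : G := (zeroH, n).

Lemma zpow_mul (m n : Z) : wr_mul (zpow m) (zpow n) = zpow (m + n).
Proof. apply G_ext; reflexivity. Qed.

Lemma InA_zpow (x : G) : InA x -> x = zpow (snd x).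
Proof. intros Hx; apply G_ext; [exact Hx | reflexivity]. Qed.

Definition apow (n : nat) : G := zpow (Z.of_nat n).

Lemma apow_mul (m n : nat) : wr_mul (apow m) (apow n) = apow (m + n).
Proof. unfold apow; rewrite zpow_mul; f_equal; lia. Qed.

Lemma apow_inj (m n : nat) : apow m = apow n -> m = n.
Proof. intros E; apply (f_equal snd) in E; cbn in E; lia. Qed.

Lemma a_apow : wr_a = apow 1.
Proof. apply G_ext; reflexivity. Qed.

Lemma wr_pow_a (n : nat) : wr_pow wr_a n = apow n.
Proof.
  induction n as [|n IH]; [reflexivity|].
  change (wr_mul (wr_pow wr_a n) wr_a = apow (S n)).
  rewrite IH, a_apow, apow_mul; f_equal; lia.
Qed.

Ltac coords :=
  rewrite ?coef_mul, ?snd_mul, ?coef_b, ?snd_b; cbn [fst snd coef wr_a zeroH zpow];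
  rewrite ?Z.add_0_l, ?Z.add_0_r.
Ltac coords_in H :=
  rewrite ?coef_mul, ?snd_mul, ?coef_b, ?snd_b in H; cbn [fst snd coef wr_a zeroH zpow] in H;
  rewrite ?Z.add_0_l, ?Z.add_0_r in H.

Lemma coef_congr (x y : G) (j : Z) : x = y -> coef (fst x) j = coef (fst y) j.
Proof. intros ->; reflexivity. Qed.

(** * Rigidity of finitely supported functions *)

Lemma fs_bound (h : Z -> Z) :
  fin_supp h -> exists B, 0 <= B /\ forall k, B < Z.abs k -> h k = 0.
Proof. intros [B HB]; exists (Z.abs B); split; [lia|]; intros k Hk; apply HB; lia. Qed.

Lemma halfline_zero (h : Z -> Z) (N j0 : Z) : fin_supp h -> N <> 0 ->
  (forall i, 0 <= i -> h (j0 + i * N) = h (j0 + (i + 1) * N)) -> h j0 = 0.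
Proof.
  intros Hs HN Hc; destruct (fs_bound h Hs) as [B [HB0 HB]].
  assert (E : forall i, 0 <= i -> h j0 = h (j0 + i * N)).
  { apply natlike_ind; [f_equal; lia|].
    intros i Hi IH; rewrite IH, Hc by exact Hi; f_equal; lia. }
  rewrite (E (B + Z.abs j0 + 1)) by lia; apply HB.
  destruct (Z_lt_le_dec N 0); nia.
Qed.

Lemma no_single_jump (h : Z -> Z) (N : Z) : fin_supp h -> N <> 0 ->
  ~ (forall i, h (i * N) - h ((i + 1) * N) = if i =? 0 then 1 else 0).
Proof.
  intros Hs HN Hc.
  assert (Hright : h N = 0).
  { apply (halfline_zero h N N Hs HN); intros i Hi.
    specialize (Hc (i + 1)); destruct (Z.eqb_spec (i + 1) 0); [lia|].
    replace (N + i * N) with ((i + 1) * N) by lia.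
    replace (N + (i + 1) * N) with ((i + 1 + 1) * N) by lia; lia. }
  assert (Hleft : h 0 = 0).
  { apply (halfline_zero h (- N) 0 Hs ltac:(lia)); intros i Hi.
    specialize (Hc (- (i + 1))); destruct (Z.eqb_spec (- (i + 1)) 0); [lia|].
    replace (0 + i * - N) with ((- (i + 1) + 1) * N) by lia.
    replace (0 + (i + 1) * - N) with (- (i + 1) * N) by lia; lia. }
  specialize (Hc 0); rewrite Z.mul_0_l, Z.mul_1_l in Hc; cbn in Hc; lia.
Qed.

Lemma doubling_zero (h : Z -> Z) (j0 : Z) : fin_supp h ->
  (forall t, 0 <= t -> h (j0 - t - 1) = 2 * h (j0 - t)) -> h j0 = 0.
Proof.
  intros Hs H; destruct (fs_bound h Hs) as [B [HB0 HB]].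
  assert (E : forall t, 0 <= t -> h (j0 - t) = 2 ^ t * h j0).
  { apply natlike_ind; [rewrite Z.sub_0_r, Z.pow_0_r; lia|].
    intros t Ht IH; replace (j0 - Z.succ t) with (j0 - t - 1) by lia.
    rewrite H, IH, Z.pow_succ_r by exact Ht; lia. }
  pose proof (E (B + Z.abs j0 + 1) ltac:(lia)) as E1; rewrite HB in E1 by lia.
  assert (0 < 2 ^ (B + Z.abs j0 + 1)) by (apply Z.pow_pos_nonneg; lia); nia.
Qed.

Lemma commute_b_iff (u : G) : wr_mul u wr_b = wr_mul wr_b u <-> snd u = 0.
Proof.
  split.
  - intros E; pose proof (coef_congr _ _ (- snd u) E) as C; coords_in C.
    rewrite Z.add_opp_diag_l in C; unfold delta0 in C.
    destruct (Z.eqb_spec (- snd u) 0); cbn in C; lia.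
  - intros Hu; apply G_ext; [intros j|]; coords; rewrite ?Hu, ?Z.add_0_r; lia.
Qed.

Lemma commute_a_iff (x : G) : wr_mul x wr_a = wr_mul wr_a x <-> InA x.
Proof.
  split.
  - intros E j; apply (halfline_zero _ 1 j (coef_supp (fst x))); [lia|].
    intros i _; pose proof (coef_congr _ _ (j + i * 1) E) as C; coords_in C.
    replace (j + (i + 1) * 1) with (j + i * 1 + 1) by lia; lia.
  - intros Hx; apply G_ext; [intros j|]; coords; rewrite ?Hx; lia.
Qed.

Lemma idempotent_iff (x : G) : InA x -> wr_mul x x = x <-> snd x = 0.
Proof.
  intros Hx; split.
  - intros E; apply (f_equal snd) in E; rewrite snd_mul in E; lia.
  - intros E; apply G_ext; [intros j|]; coords; rewrite ?Hx; lia.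
Qed.

Lemma twisted_commute_iff (x z m : G) : InA x -> snd z = 0 -> snd m = 0 ->
  wr_mul z x = wr_mul x (wr_mul m z) <->
  forall j, coef (fst m) j = coef (fst z) (j - snd x) - coef (fst z) j.
Proof.
  intros Hx Hz Hm; split.
  - intros E j; pose proof (coef_congr _ _ (j - snd x) E) as C; coords_in C.
    rewrite ?Hx, ?Hz, ?Hm, ?Z.sub_add, ?Z.add_0_r in C; lia.
  - intros H; apply G_ext; [intros j|]; coords; rewrite ?Hx, ?Hz, ?Hm, ?H, ?Z.add_0_r,
      ?Z.add_simpl_r; lia.
Qed.

Lemma commute_bx_iff (g x : G) : InA x ->
  wr_mul g (wr_mul wr_b x) = wr_mul (wr_mul wr_b x) g <->
  forall j, coef (fst g) j + delta0 (j + snd g) = delta0 j + coef (fst g) (j + snd x).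
Proof.
  intros Hx; split.
  - intros E j; pose proof (coef_congr _ _ j E) as C; coords_in C.
    rewrite ?Hx in C; lia.
  - intros H; apply G_ext; [intros j; specialize (H j)|]; coords; rewrite ?Hx; lia.
Qed.

Lemma doubling_relation_iff (z m : G) : snd z = 0 -> snd m = 0 ->
  wr_mul z wr_a = wr_mul wr_a (wr_mul m (wr_mul z z)) <->
  forall j, coef (fst m) j + 2 * coef (fst z) j = coef (fst z) (j - 1).
Proof.
  intros Hz Hm; split.
  - intros E j; pose proof (coef_congr _ _ (j - 1) E) as C; coords_in C.
    rewrite ?Hm, ?Hz, ?Z.sub_add, ?Z.add_0_r in C; lia.
  - intros H; apply G_ext; [intros j; specialize (H (j + 1))|]; coords;
      rewrite ?Hm, ?Hz, ?Z.add_0_r, ?Z.add_simpl_r in *; lia.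
Qed.

Lemma conjugate_b_iff (x u m : G) : InA x -> snd u = 0 -> snd m = 0 ->
  wr_mul wr_b x = wr_mul x (wr_mul u m) <->
  forall i, coef (fst u) i + coef (fst m) i = delta0 (i - snd x).
Proof.
  intros Hx Hu Hm; split.
  - intros E i; pose proof (coef_congr _ _ (i - snd x) E) as C; coords_in C.
    rewrite ?Hx, ?Hu, ?Z.sub_add, ?Z.add_0_r in C; lia.
  - intros H; apply G_ext; [intros j; specialize (H (j + snd x))|]; coords;
      rewrite ?Hx, ?Hu, ?Hm, ?Z.add_0_r, ?Z.add_simpl_r in *; lia.
Qed.

(** * Divisibility between powers of [a] *)

Lemma delta0_mul (N i : Z) : N <> 0 -> delta0 (i * N) = if i =? 0 then 1 else 0.
Proof.
  intros HN; unfold delta0; destruct (Z.eqb_spec i 0), (Z.eqb_spec (i * N) 0); nia.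
Qed.

Lemma commute_equation_divides (h : Z -> Z) (N p : Z) : fin_supp h ->
  (forall j, h j + delta0 (j + p) = delta0 j + h (j + N)) -> (N | p).
Proof.
  intros Hs E; destruct (Z.eq_dec N 0) as [->|HN].
  - specialize (E 0); rewrite Z.add_0_l, Z.add_0_r in E; unfold delta0 in E.
    revert E; destruct (Z.eqb_spec p 0) as [->|]; intros E;
      [apply Z.divide_refl | rewrite Z.eqb_refl in E; lia].
  - destruct (Zdivide_dec N p) as [D|ND]; [exact D|exfalso].
    apply (no_single_jump h N Hs HN); intros i; specialize (E (i * N)).
    rewrite delta0_mul in E by exact HN.
    assert (delta0 (i * N + p) = 0).
    { unfold delta0; destruct (Z.eqb_spec (i * N + p) 0); [|reflexivity].
      exfalso; apply ND; exists (- i); lia. }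
    replace ((i + 1) * N) with (i * N + N) by lia; destruct (i =? 0); lia.
Qed.

Definition onclass (N : Z) (f : Z -> Z) (j : Z) : Z :=
  if j mod N =? 0 then f (- (j / N)) else 0.

Lemma onclass_supp (N c : Z) (f : Z -> Z) :
  (forall i, f i <> 0 -> Z.abs i <= Z.abs c) -> fin_supp (onclass N f).
Proof.
  intros Hf; exists (Z.abs N * (Z.abs c + 1)); intros k Hk; unfold onclass.
  destruct (Z.eqb_spec (k mod N) 0) as [E|E]; [|reflexivity].
  destruct (Z.eq_dec N 0) as [->|HN]; [rewrite Zmod_0_r in E; lia|].
  destruct (Z.eq_dec (f (- (k / N))) 0) as [F|F]; [exact F|exfalso].
  apply Hf in F; pose proof (Z_div_mod_eq_full k N) as Ek; rewrite E, Z.add_0_r in Ek.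
  assert (Z.abs k = Z.abs N * Z.abs (k / N)) by (rewrite Ek at 1; apply Z.abs_mul); nia.
Qed.

Lemma onclass_mul (N q : Z) (f : Z -> Z) : N <> 0 -> onclass N f (q * N) = f (- q).
Proof.
  intros HN; unfold onclass; rewrite Z_mod_mult, Z_div_mult_full by exact HN; reflexivity.
Qed.

Lemma onclass_off (N j : Z) (f : Z -> Z) : j mod N <> 0 -> onclass N f j = 0.
Proof. intros H; unfold onclass; destruct (Z.eqb_spec (j mod N) 0); tauto. Qed.

Lemma multiple_or_not (N j : Z) : N <> 0 ->
  (exists q, j = q * N) \/ (j mod N <> 0 /\ forall q, j <> q * N).
Proof.
  intros HN; destruct (Z.eq_dec (j mod N) 0) as [E|E].
  - left; exists (j / N); pose proof (Z_div_mod_eq_full j N); lia.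
  - right; split; [exact E|]; intros q ->; apply E, Z_mod_mult.
Qed.

Definition step (c i : Z) : Z :=
  (if (0 <=? i) && (i <? c) then 1 else 0) - (if (c <=? i) && (i <? 0) then 1 else 0).

Ltac Zbool_cases :=
  repeat match goal with
  | |- context [Z.leb ?a ?b] => destruct (Z.leb_spec a b)
  | |- context [Z.ltb ?a ?b] => destruct (Z.ltb_spec a b)
  | |- context [Z.eqb ?a ?b] => destruct (Z.eqb_spec a b)
  end; cbn [andb].

Lemma step_diff (c i : Z) :
  step c i - step c (i - 1) = (if i =? 0 then 1 else 0) - (if i =? c then 1 else 0).
Proof. unfold step; Zbool_cases; lia. Qed.

Lemma step_supp (c i : Z) : step c i <> 0 -> Z.abs i <= Z.abs c.
Proof. unfold step; Zbool_cases; lia. Qed.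

(** The element of [H] witnessing that [a^(N c)] commutes with some
    element of [H] times [b a^N]: it is [step c] spread along [N Z]. *)
Definition div_witness (N c : Z) : Hgrp :=
  MkH (onclass N (step c)) (onclass_supp N c (step c) (step_supp c)).

Lemma div_witness_equation (N c j : Z) :
  coef (div_witness N c) j + delta0 (j + N * c) = delta0 j + coef (div_witness N c) (j + N).
Proof.
  cbn [coef div_witness]; destruct (Z.eq_dec N 0) as [->|HN]; [rewrite !Z.add_0_r; lia|].
  destruct (multiple_or_not N j HN) as [[q ->]|[Hm Hq]].
  - replace (q * N + N) with ((q + 1) * N) by lia.
    replace (q * N + N * c) with ((q + c) * N) by lia.
    rewrite !onclass_mul, !delta0_mul by exact HN.
    pose proof (step_diff c (- q)) as D; replace (- q - 1) with (- (q + 1)) in D by lia.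
    destruct (Z.eqb_spec (- q) 0), (Z.eqb_spec (- q) c), (Z.eqb_spec q 0),
      (Z.eqb_spec (q + c) 0); lia.
  - assert (Hm' : (j + N) mod N <> 0)
      by (replace (j + N) with (j + 1 * N) by lia; rewrite Z_mod_plus_full; exact Hm).
    rewrite !onclass_off by assumption; unfold delta0.
    destruct (Z.eqb_spec j 0); [destruct (Hq 0); lia|].
    destruct (Z.eqb_spec (j + N * c) 0); [destruct (Hq (- c)); lia|lia].
Qed.

(** * The cyclic subgroup [<b>] *)

(** [u] lies in [<b>]: it is [b^c] with [c = u_0]. *)
Definition InB (u : G) : Prop := snd u = 0 /\ forall j, j <> 0 -> coef (fst u) j = 0.

Lemma commute_equation_class_zero (h : Z -> Z) (N k r : Z) : fin_supp h -> N <> 0 ->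
  (forall j, h j + delta0 (j + k) = delta0 j + h (j + N)) ->
  (forall q, r <> q * N) -> forall i, h (r + i * N) = 0.
Proof.
  intros Hs HN E Hr i.
  destruct (commute_equation_divides h N k Hs E) as [q ->].
  apply (halfline_zero h N _ Hs HN); intros i' _; specialize (E (r + i * N + i' * N)).
  assert (delta0 (r + i * N + i' * N + q * N) = 0 /\ delta0 (r + i * N + i' * N) = 0)
    as [D1 D2].
  { unfold delta0; split; [destruct (Z.eqb_spec (r + i * N + i' * N + q * N) 0) as [e|]|
      destruct (Z.eqb_spec (r + i * N + i' * N) 0) as [e|]]; trivial;
      [destruct (Hr (- (i + i' + q))) | destruct (Hr (- (i + i')))]; lia. }
  replace (r + i * N + (i' + 1) * N) with (r + i * N + i' * N + N) by lia; lia.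
Qed.

Lemma periodic_but_one_zero (z : Z -> Z) (N r : Z) : fin_supp z -> N <> 0 ->
  (forall i, i <> 0 -> z (r + i * N - N) = z (r + i * N)) -> z r = 0 /\ z (r - N) = 0.
Proof.
  intros Hs HN Hp; split.
  - apply (halfline_zero z N r Hs HN); intros i Hi.
    rewrite <- (Hp (i + 1)) by lia; f_equal; lia.
  - apply (halfline_zero z (- N) (r - N) Hs ltac:(lia)); intros i Hi.
    specialize (Hp (- i - 1) ltac:(lia)).
    replace (r - N + i * - N) with (r + (- i - 1) * N) by lia.
    replace (r - N + (i + 1) * - N) with (r + (- i - 1) * N - N) by lia; lia.
Qed.

(** The property of [u] in [H] that the formula [ConstF] below expresses:
    for every [x = a^N <> 1], [u] is congruent to a twisted commutator
    [m = x^-1 z x z^-1] modulo elements commuting with [b x]. *)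
Definition const_condition (u : G) : Prop :=
  forall x : G, InA x -> snd x <> 0 ->
  exists g y z m : G, InA y /\ snd z = 0 /\ snd m = 0 /\
    (forall j, coef (fst m) j = coef (fst z) (j - snd x) - coef (fst z) j) /\
    (forall j, coef (fst g) j + delta0 (j + snd g) = delta0 j + coef (fst g) (j + snd x)) /\
    g = wr_mul (wr_mul m u) y.

(** Soundness: taking [N] larger than twice the support of [u], the
    condition kills every coordinate of [u] away from [0]. *)
Lemma const_condition_InB (u : G) : snd u = 0 -> const_condition u -> InB u.
Proof.
  intros Hu H; split; [exact Hu|].
  destruct (fs_bound _ (coef_supp (fst u))) as [B [HB0 HB]]; set (N := 2 * B + 1).
  destruct (H (zpow N) (fun _ => eq_refl) ltac:(cbn; lia))
    as [g [y [z [m [Hy [Hz [Hm [Hl [Hc ->]]]]]]]]]; cbn [snd zpow] in Hl, Hc.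
  assert (Hg : forall j, coef (fst (wr_mul (wr_mul m u) y)) j
                         = coef (fst m) j + coef (fst u) j).
  { intros j; coords; rewrite Hm, Hy, !Z.add_0_r; lia. }
  intros r Hr0; destruct (Z_lt_le_dec B (Z.abs r)) as [Hr|Hr]; [apply HB, Hr|].
  assert (Hnot : forall q, r <> q * N) by (intros q E; destruct (Z.eq_dec q 0); nia).
  pose proof (commute_equation_class_zero _ N _ r (coef_supp _) ltac:(lia) Hc Hnot) as Hv.
  assert (Hzp : forall i, i <> 0 ->
            coef (fst z) (r + i * N - N) = coef (fst z) (r + i * N)).
  { intros i Hi; assert (coef (fst u) (r + i * N) = 0) by (apply HB; nia).
    specialize (Hv i); rewrite Hg in Hv; specialize (Hl (r + i * N)); lia. }
  destruct (periodic_but_one_zero _ N r (coef_supp _) ltac:(lia) Hzp) as [Z1 Z2].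
  specialize (Hv 0); rewrite Z.mul_0_l, Z.add_0_r, Hg in Hv; specialize (Hl r); lia.
Qed.

Definition ramp (c i : Z) : Z :=
  (if (1 <=? i) && (i <=? c) then i - c else 0) - (if (c <? i) && (i <=? 0) then i - c else 0).

Lemma ramp_diff (c i : Z) :
  ramp c (i + 1) - ramp c i = step c i - c * (if i =? 0 then 1 else 0).
Proof. unfold ramp, step; Zbool_cases; lia. Qed.

Lemma ramp_supp (c i : Z) : ramp c i <> 0 -> Z.abs i <= Z.abs c.
Proof. unfold ramp; Zbool_cases; lia. Qed.

Definition ramp_witness (N c : Z) : Hgrp :=
  MkH (onclass N (ramp c)) (onclass_supp N c (ramp c) (ramp_supp c)).

Lemma ramp_witness_equation (N c j : Z) : N <> 0 ->
  coef (div_witness N c) j - c * delta0 j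
  = coef (ramp_witness N c) (j - N) - coef (ramp_witness N c) j.
Proof.
  intros HN; cbn [coef div_witness ramp_witness].
  destruct (multiple_or_not N j HN) as [[q ->]|[Hm Hq]].
  - replace (q * N - N) with ((q - 1) * N) by lia.
    rewrite !onclass_mul, delta0_mul by exact HN.
    pose proof (ramp_diff c (- q)) as D; replace (- q + 1) with (- (q - 1)) in D by lia.
    destruct (Z.eqb_spec (- q) 0), (Z.eqb_spec q 0); lia.
  - assert (Hm' : (j - N) mod N <> 0)
      by (replace (j - N) with (j + (-1) * N) by lia; rewrite Z_mod_plus_full; exact Hm).
    rewrite !onclass_off by assumption; unfold delta0.
    destruct (Z.eqb_spec j 0); [destruct (Hq 0)|]; lia.
Qed.

Lemma fin_supp_translate_diff (h : Z -> Z) (N : Z) :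
  fin_supp h -> fin_supp (fun j => h (j - N) - h j).
Proof.
  intros Hs; destruct (fs_bound h Hs) as [B [HB0 HB]]; exists (B + Z.abs N).
  intros k Hk; rewrite !HB by lia; lia.
Qed.

Definition translate_diff (h : Hgrp) (N : Z) : Hgrp :=
  MkH _ (fin_supp_translate_diff (coef h) N (coef_supp h)).

Lemma InB_const_condition (u : G) : InB u -> const_condition u.
Proof.
  intros [Hu Hsupp] x Hx HN; set (N := snd x) in *; set (c := coef (fst u) 0).
  exists (div_witness N c, N * c), (zpow (N * c)), (ramp_witness N c, 0),
    (translate_diff (ramp_witness N c) N, 0).
  split; [intros j; reflexivity|]; split; [reflexivity|]; split; [reflexivity|].
  split; [intros j; reflexivity|]; split; [intros j; apply div_witness_equation|].
  apply G_ext; [intros j|]; coords; [|rewrite Hu; lia].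
  pose proof (ramp_witness_equation N c j HN) as E; unfold delta0 in E.
  cbn [translate_diff coef]; destruct (Z.eq_dec j 0) as [->|Hj].
  - rewrite Z.eqb_refl in E; fold c; lia.
  - rewrite Hsupp by exact Hj; apply Z.eqb_neq in Hj; rewrite Hj in E; lia.
Qed.

(** * Nonnegative powers of [a] *)

Definition IsNatPow (x : G) : Prop := exists n : nat, x = apow n.

Lemma IsNatPow_iff (x : G) : IsNatPow x <-> InA x /\ 0 <= snd x.
Proof.
  split.
  - intros [n ->]; split; [intros j; reflexivity | cbn; lia].
  - intros [Hx Hn]; exists (Z.to_nat (snd x)); unfold apow; rewrite Z2Nat.id by exact Hn.
    apply InA_zpow, Hx.
Qed.

Definition natpow_condition (x : G) : Prop :=
  exists u z m : G, InB u /\ snd z = 0 /\ snd m = 0 /\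
    (forall j, coef (fst m) j + 2 * coef (fst z) j = coef (fst z) (j - 1)) /\
    (forall i, coef (fst u) i + coef (fst m) i = delta0 (i - snd x)).

(** Soundness: for [n < 0] the coordinates of [z] would double at each
    step to the left of [n - 1], so [z_(n-1) = 0] and [m_n = 0], whereas
    [m_n = 1]. *)
Lemma natpow_condition_nonneg (x : G) : natpow_condition x -> 0 <= snd x.
Proof.
  intros [u [z [m [[_ Hu] [_ [_ [Hdbl Hsum]]]]]]]; set (n := snd x) in Hsum.
  destruct (Z_lt_le_dec n 0) as [Hn|Hn]; [exfalso|exact Hn].
  assert (Hm : forall i, i <= n -> coef (fst m) i = if i =? n then 1 else 0).
  { intros i Hi; specialize (Hsum i); rewrite Hu in Hsum by lia; unfold delta0 in Hsum.
    destruct (Z.eqb_spec (i - n) 0), (Z.eqb_spec i n); lia. }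
  assert (Hz : coef (fst z) (n - 1) = 0).
  { apply (doubling_zero _ _ (coef_supp (fst z))); intros t Ht.
    specialize (Hdbl (n - 1 - t)); rewrite Hm in Hdbl by lia.
    destruct (Z.eqb_spec (n - 1 - t) n); lia. }
  specialize (Hdbl n); rewrite Hm, Z.eqb_refl in Hdbl by lia; lia.
Qed.

Lemma fin_supp_scaled_delta (c j0 : Z) : fin_supp (fun j => c * delta0 (j - j0)).
Proof.
  exists (Z.abs j0); intros k Hk; unfold delta0; destruct (Z.eqb_spec (k - j0) 0); lia.
Qed.

Lemma fin_supp_geometric (n : Z) :
  fin_supp (fun j => if (0 <=? j) && (j <=? n - 1) then 2 ^ (n - 1 - j) else 0).
Proof.
  exists (Z.abs n); intros k Hk.
  destruct (Z.leb_spec 0 k), (Z.leb_spec k (n - 1)); cbn; lia.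
Qed.

Lemma fin_supp_natpow_m (n : Z) :
  fin_supp (fun j => delta0 (j - n) - 2 ^ n * delta0 j).
Proof.
  exists (Z.abs n); intros k Hk; unfold delta0.
  destruct (Z.eqb_spec (k - n) 0), (Z.eqb_spec k 0); lia.
Qed.

(** Completeness: for [n >= 0] take [u = b^(2^n)],
    [z = sum_(0 <= j < n) 2^(n-1-j) b_j] and [m = b_n - 2^n b_0]. *)
Lemma nonneg_natpow_condition (x : G) : 0 <= snd x -> natpow_condition x.
Proof.
  intros Hn; unfold natpow_condition; set (n := snd x) in *.
  exists (MkH _ (fin_supp_scaled_delta (2 ^ n) 0), 0), (MkH _ (fin_supp_geometric n), 0),
    (MkH _ (fin_supp_natpow_m n), 0); cbn [fst snd coef].
  split; [split; [reflexivity|]; intros j Hj; cbn [fst coef]; unfold delta0;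
          destruct (Z.eqb_spec (j - 0) 0); lia|].
  split; [reflexivity|]; split; [reflexivity|]; split.
  - intros j; unfold delta0.
    destruct (Z.eqb_spec (j - n) 0), (Z.eqb_spec j 0);
    destruct (Z.leb_spec 0 j), (Z.leb_spec j (n - 1)), (Z.leb_spec 0 (j - 1)),
      (Z.leb_spec (j - 1) (n - 1)); cbn [andb]; try lia.
    + replace n with 0 by lia; rewrite Z.pow_0_r; lia.
    + replace (n - 1 - (j - 1)) with 0 by lia; rewrite Z.pow_0_r; lia.
    + subst j; rewrite <- Z.pow_succ_r by lia.
      replace (Z.succ (n - 1 - 0)) with n by lia; lia.
    + replace (n - 1 - (j - 1)) with (Z.succ (n - 1 - j)) by lia.
      rewrite Z.pow_succ_r by lia; lia.
  - intros i; rewrite Z.sub_0_r; lia.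
Qed.

Lemma nat_divide_Z (m n : nat) : Nat.divide m n <-> (Z.of_nat m | Z.of_nat n).
Proof.
  split.
  - intros [k ->]; exists (Z.of_nat k); lia.
  - intros [k E]; destruct m as [|m]; [exists 0%nat; lia|].
    exists (Z.to_nat k); nia.
Qed.

Section Lcm.
Local Open Scope nat_scope.

Definition is_lcm (m n k : nat) : Prop :=
  Nat.divide m k /\ Nat.divide n k /\
  forall t, Nat.divide m t -> Nat.divide n t -> Nat.divide k t.

(** Consecutive numbers are coprime, so their least common multiple is their
    product; this is how squares are defined from divisibility. *)
Lemma is_lcm_consecutive (m k : nat) : is_lcm m (m + 1) k <-> k = m * (m + 1).
Proof.
  assert (Hprod : forall t, Nat.divide m t -> Nat.divide (m + 1) t ->
                    Nat.divide (m * (m + 1)) t).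
  { intros t [q ->] Hd; rewrite Nat.mul_comm in Hd; apply Nat.gauss in Hd.
    - destruct Hd as [r ->]; exists r; ring.
    - apply Nat.bezout_1_gcd; exists 1, 1; ring. }
  split.
  - intros [H1 [H2 H3]]; apply Nat.divide_antisym; [|apply Hprod; assumption].
    apply H3; [exists (m + 1) | exists m]; ring.
  - intros ->; split; [exists (m + 1); ring|]; split; [exists m; ring|exact Hprod].
Qed.

End Lcm.

(** * Definable relations in [(G, .)] with the parameters [a] and [b] *)

Lemma upd_same {A : Type} (w : nat -> A) (n : nat) (x : A) : upd w n x n = x.
Proof. unfold upd; rewrite Nat.eqb_refl; reflexivity. Qed.

Lemma upd_other {A : Type} (w : nat -> A) (n i : nat) (x : A) :
  i <> n -> upd w n x i = w i.
Proof. intros H; unfold upd; destruct (Nat.eqb_spec i n); congruence. Qed.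

Ltac simpl_upd :=
  unfold upd; cbv beta;
  repeat match goal with
  | |- context [Nat.eqb ?i ?n] =>
      first [ rewrite (proj2 (Nat.eqb_eq i n)) by lia
            | rewrite (proj2 (Nat.eqb_neq i n)) by lia ]
  end; cbv beta iota.
Ltac simpl_upd_in H :=
  unfold upd in H; cbv beta in H;
  repeat match type of H with
  | context [Nat.eqb ?i ?n] =>
      first [ rewrite (proj2 (Nat.eqb_eq i n)) in H by lia
            | rewrite (proj2 (Nat.eqb_neq i n)) in H by lia ]
  end; cbv beta iota in H.

Local Notation gv i := (@Var group_sym i).
Local Notation "s ** t" := (App GMul s t) (at level 40, left associativity).

Ltac unfold_sat := cbn [sat eval interp ZwrZ]; simpl_upd.

Definition Good (pa pb : nat) (w : nat -> G) : Prop := w pa = wr_a /\ w pb = wr_b.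

Ltac good := unfold Good; simpl_upd; split; assumption.

Ltac side := first [ lia | good | simpl_upd; first [assumption | reflexivity] ].

Section Formulas.

(** The variables holding the parameters [a] and [b].  Every formula below
    with a base index [c] only binds variables [>= c]; all other variables
    it mentions must be [< c]. *)
Variables pa pb : nat.

Local Notation Good := (Good pa pb).

Definition CommF (s t : term group_sym) : formula group_sym := FEq (s ** t) (t ** s).

Definition InHF (u : nat) : formula group_sym := CommF (gv u) (gv pb).

Definition InAF (x : nat) : formula group_sym := CommF (gv x) (gv pa).

Lemma InHF_sat (w : nat -> G) (u : nat) : Good w -> sat ZwrZ w (InHF u) <-> snd (w u) = 0.
Proof. intros [_ Hb]; unfold InHF, CommF; unfold_sat; rewrite Hb; apply commute_b_iff. Qed.

Lemma InAF_sat (w : nat -> G) (x : nat) : Good w -> sat ZwrZ w (InAF x) <-> InA (w x).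
Proof. intros [Ha _]; unfold InAF, CommF; unfold_sat; rewrite Ha; apply commute_a_iff. Qed.

(** [u] lies in [<b>], expressed through [const_condition]; the variables
    [c], ..., [c+4] stand for [x, g, y, z, m]. *)
Definition InBF (u c : nat) : formula group_sym :=
  let body :=
    FAnd (InAF (c + 2)) (FAnd (InHF (c + 3)) (FAnd (InHF (c + 4))
      (FAnd (FEq (gv (c + 3) ** gv c) (gv c ** (gv (c + 4) ** gv (c + 3))))
      (FAnd (CommF (gv (c + 1)) (gv pb ** gv c))
            (FEq (gv (c + 1)) (gv (c + 4) ** gv u ** gv (c + 2))))))) in
  FAnd (InHF u)
    (FAll c (FImp (InAF c) (FImp (FNot (FEq (gv c ** gv c) (gv c)))
      (FEx (c + 1) (FEx (c + 2) (FEx (c + 3) (FEx (c + 4) body))))))).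

Lemma InBF_sat (w : nat -> G) (u c : nat) : Good w -> (pa < c)%nat -> (pb < c)%nat ->
  (u < c)%nat -> sat ZwrZ w (InBF u c) <-> InB (w u).
Proof.
  intros Hg H1 H2 H3; pose proof Hg as [Ha Hb]; unfold InBF, InHF, InAF, CommF.
  unfold_sat; rewrite Ha, Hb; split.
  - intros [Hu H]; apply commute_b_iff in Hu; apply const_condition_InB; [exact Hu|].
    intros x Hx Hx1.
    destruct (H x) as [g [y [z [m [Hy [Hz [Hm [Hl [Hc Hdef]]]]]]]]];
      [apply commute_a_iff, Hx | rewrite idempotent_iff; assumption|].
    rewrite commute_a_iff in Hy; rewrite commute_b_iff in Hz, Hm.
    rewrite twisted_commute_iff in Hl by assumption.
    rewrite commute_bx_iff in Hc by assumption.
    exists g, y, z, m; tauto.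
  - intros Hu; split; [apply commute_b_iff, Hu|].
    intros x Hx Hx1; apply commute_a_iff in Hx; rewrite idempotent_iff in Hx1 by exact Hx.
    destruct (InB_const_condition _ Hu x Hx Hx1)
      as [g [y [z [m [Hy [Hz [Hm [Hl [Hc Hdef]]]]]]]]].
    exists g, y, z, m; rewrite commute_a_iff, !commute_b_iff, twisted_commute_iff,
      commute_bx_iff by (assumption || apply Hu); tauto.
Qed.

(** [x] is a nonnegative power of [a] (the domain of the interpretation),
    expressed through [natpow_condition]; [c], [c+1], [c+2] stand for
    [u, z, m]. *)
Definition NatPowF (x c : nat) : formula group_sym :=
  FAnd (InAF x) (FEx c (FEx (c + 1) (FEx (c + 2)
    (FAnd (InBF c (c + 3)) (FAnd (InHF (c + 1)) (FAnd (InHF (c + 2))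
      (FAnd (FEq (gv (c + 1) ** gv pa) (gv pa ** (gv (c + 2) ** (gv (c + 1) ** gv (c + 1)))))
            (FEq (gv pb ** gv x) (gv x ** (gv c ** gv (c + 2))))))))))).

Lemma NatPowF_sat (w : nat -> G) (x c : nat) : Good w -> (pa < c)%nat -> (pb < c)%nat ->
  (x < c)%nat -> sat ZwrZ w (NatPowF x c) <-> IsNatPow (w x).
Proof.
  intros Hg H1 H2 H3; pose proof Hg as [Ha Hb]; unfold NatPowF.
  unfold_sat; rewrite Ha, Hb, InAF_sat, IsNatPow_iff by exact Hg; split.
  - intros [Hx [u [z [m [Hu [Hz [Hm [Hd Hc]]]]]]]]; split; [exact Hx|].
    rewrite InBF_sat in Hu by (good || lia); rewrite !InHF_sat in Hz, Hm by good.
    simpl_upd_in Hu; simpl_upd_in Hz; simpl_upd_in Hm.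
    apply natpow_condition_nonneg; exists u, z, m.
    rewrite doubling_relation_iff in Hd by assumption.
    rewrite conjugate_b_iff in Hc by (apply Hu || assumption); tauto.
  - intros [Hx Hn]; split; [exact Hx|].
    destruct (nonneg_natpow_condition _ Hn) as [u [z [m [Hu [Hz [Hm [Hd Hc]]]]]]].
    exists u, z, m; rewrite InBF_sat, !InHF_sat by (good || lia); simpl_upd.
    rewrite doubling_relation_iff, conjugate_b_iff by (apply Hu || assumption); tauto.
Qed.

Definition DivF (x y c : nat) : formula group_sym :=
  FEx c (FAnd (InHF c) (CommF (gv c ** gv y) (gv pb ** gv x))).

Lemma DivF_sat (w : nat -> G) (x y c : nat) (m n : Z) : Good w ->
  (pa < c)%nat -> (pb < c)%nat -> (x < c)%nat -> (y < c)%nat ->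
  w x = zpow m -> w y = zpow n -> sat ZwrZ w (DivF x y c) <-> (m | n).
Proof.
  intros Hg H1 H2 H3 H4 Ex Ey; pose proof Hg as [Ha Hb]; unfold DivF, CommF.
  unfold_sat; rewrite Hb, Ex, Ey; split.
  - intros [v [Hv E]]; rewrite InHF_sat in Hv by good; simpl_upd_in Hv.
    rewrite commute_bx_iff in E by (intros j; reflexivity).
    apply (commute_equation_divides (coef (fst v)) m n (coef_supp _)).
    intros j; specialize (E j); coords_in E; rewrite Hv, Z.add_0_l in E; exact E.
  - intros [q ->]; exists (div_witness m q, 0).
    rewrite InHF_sat by good; simpl_upd; split; [reflexivity|].
    rewrite commute_bx_iff by (intros j; reflexivity); intros j; coords.
    rewrite Z.mul_comm; apply div_witness_equation.
Qed.

Corollary DivF_sat_nat (w : nat -> G) (x y c : nat) (m n : nat) : Good w ->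
  (pa < c)%nat -> (pb < c)%nat -> (x < c)%nat -> (y < c)%nat ->
  w x = apow m -> w y = apow n -> sat ZwrZ w (DivF x y c) <-> Nat.divide m n.
Proof. intros; rewrite nat_divide_Z; apply DivF_sat; assumption. Qed.

Definition LcmF (x y l c : nat) : formula group_sym :=
  FAnd (DivF x l c) (FAnd (DivF y l c)
    (FAll c (FImp (NatPowF c (c + 1)) (FImp (DivF x c (c + 1))
      (FImp (DivF y c (c + 1)) (DivF l c (c + 1))))))).

Lemma LcmF_sat (w : nat -> G) (x y l c m n k : nat) : Good w ->
  (pa < c)%nat -> (pb < c)%nat -> (x < c)%nat -> (y < c)%nat -> (l < c)%nat ->
  w x = apow m -> w y = apow n -> w l = apow k -> sat ZwrZ w (LcmF x y l c) <-> is_lcm m n k.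
Proof.
  intros Hg H1 H2 H3 H4 H5 Ex Ey El; pose proof Hg as [Ha Hb]; unfold LcmF.
  cbn [sat]; rewrite (DivF_sat_nat w x l c m k), (DivF_sat_nat w y l c n k) by side.
  unfold is_lcm; split; intros [D1 [D2 H]]; split; try split; try assumption.
  - intros t Dt1 Dt2; specialize (H (apow t)).
    rewrite NatPowF_sat, (DivF_sat_nat _ x c (c + 1) m t), (DivF_sat_nat _ y c (c + 1) n t),
      (DivF_sat_nat _ l c (c + 1) k t) in H by side.
    simpl_upd_in H; apply H; [exists t|..]; trivial.
  - intros g Dg Dx Dy; rewrite NatPowF_sat in Dg by side; simpl_upd_in Dg.
    destruct Dg as [t Et].
    rewrite (DivF_sat_nat _ x c (c + 1) m t) in Dx by side.
    rewrite (DivF_sat_nat _ y c (c + 1) n t) in Dy by side.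
    rewrite (DivF_sat_nat _ l c (c + 1) k t) by side; auto.
Qed.

(** [s = x^2] in exponents: [x (x + 1) = lcm(x, x + 1) = s + x]. *)
Definition SqF (x s c : nat) : formula group_sym :=
  FEx c (FEx (c + 1) (FAnd (NatPowF c (c + 2))
    (FAnd (FEq (gv (c + 1)) (gv x ** gv pa))
    (FAnd (LcmF x (c + 1) c (c + 2)) (FEq (gv c) (gv s ** gv x)))))).

Lemma SqF_sat (w : nat -> G) (x s c m k : nat) : Good w ->
  (pa < c)%nat -> (pb < c)%nat -> (x < c)%nat -> (s < c)%nat ->
  w x = apow m -> w s = apow k -> sat ZwrZ w (SqF x s c) <-> k = (m * m)%nat.
Proof.
  intros Hg H1 H2 H3 H4 Ex Es; pose proof Hg as [Ha Hb]; unfold SqF.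
  unfold_sat; rewrite Ha, Ex, Es, a_apow, !apow_mul; split.
  - intros [l [x1 [Dl [-> [Lc El]]]]]; rewrite NatPowF_sat in Dl by side.
    simpl_upd_in Dl; destruct Dl as [L ->].
    rewrite (LcmF_sat _ x (c + 1) c (c + 2) m (m + 1) L), is_lcm_consecutive in Lc by side.
    apply apow_inj in El; nia.
  - intros ->; exists (apow (m * (m + 1))), (apow (m + 1)).
    rewrite NatPowF_sat, (LcmF_sat _ x (c + 1) c (c + 2) m (m + 1) (m * (m + 1))),
      is_lcm_consecutive by side; simpl_upd.
    split; [eexists; reflexivity|]; split; [reflexivity|]; split; [reflexivity|].
    f_equal; nia.
Qed.

(** [z = x y] in exponents, via [(x + y)^2 = 2 z + x^2 + y^2]; the
    variables [c], ..., [c+3] stand for [x^2, y^2, (x + y)^2, x + y]. *)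
Definition MulF (x y z c : nat) : formula group_sym :=
  let squares :=
    FAnd (SqF x c (c + 4)) (FAnd (SqF y (c + 1) (c + 4)) (FAnd (SqF (c + 3) (c + 2) (c + 4))
      (FEq (gv (c + 2)) (gv z ** gv z ** gv c ** gv (c + 1))))) in
  FAnd (NatPowF z c) (FEx c (FEx (c + 1) (FEx (c + 2) (FEx (c + 3)
    (FAnd (NatPowF c (c + 4)) (FAnd (NatPowF (c + 1) (c + 4)) (FAnd (NatPowF (c + 2) (c + 4))
      (FAnd (FEq (gv (c + 3)) (gv x ** gv y)) squares)))))))).

Lemma MulF_sat (w : nat -> G) (x y z c m n : nat) : Good w ->
  (pa < c)%nat -> (pb < c)%nat -> (x < c)%nat -> (y < c)%nat -> (z < c)%nat ->
  w x = apow m -> w y = apow n -> sat ZwrZ w (MulF x y z c) <-> w z = apow (m * n).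
Proof.
  intros Hg H1 H2 H3 H4 H5 Ex Ey; pose proof Hg as [Ha Hb]; unfold MulF.
  unfold_sat; rewrite NatPowF_sat by side; rewrite Ex, Ey, apow_mul; split.
  - intros [[p Ep] [s1 [s2 [s3 [t [D1 [D2 [D3 [-> [Q1 [Q2 [Q3 E]]]]]]]]]]]]; rewrite Ep.
    rewrite !NatPowF_sat in D1, D2, D3 by side; simpl_upd_in D1; simpl_upd_in D2;
      simpl_upd_in D3; destruct D1 as [k1 ->], D2 as [k2 ->], D3 as [k3 ->].
    rewrite (SqF_sat _ x c (c + 4) m k1) in Q1 by side.
    rewrite (SqF_sat _ y (c + 1) (c + 4) n k2) in Q2 by side.
    rewrite (SqF_sat _ (c + 3) (c + 2) (c + 4) (m + n) k3) in Q3 by side.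
    rewrite Ep, !apow_mul in E; apply apow_inj in E; f_equal; nia.
  - intros Ez; split; [exists (m * n)%nat; exact Ez|].
    exists (apow (m * m)), (apow (n * n)), (apow ((m + n) * (m + n))), (apow (m + n)).
    rewrite !NatPowF_sat, (SqF_sat _ x c (c + 4) m (m * m)),
      (SqF_sat _ y (c + 1) (c + 4) n (n * n)),
      (SqF_sat _ (c + 3) (c + 2) (c + 4) (m + n) ((m + n) * (m + n))) by side.
    simpl_upd; rewrite Ez, !apow_mul.
    repeat split; try (eexists; reflexivity); f_equal; nia.
Qed.

End Formulas.

(** * Translation of arithmetic formulas *)

(** The arithmetic variable [i] is represented by the group variable
    [off + i], holding [a^(v i)]; the other variables of a translation are
    parameters ([pa], [pb] below [off]) or auxiliary ones (from [F] on). *)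

Fixpoint term_bound (t : term arith_sym) : nat :=
  match t with
  | Var i => S i
  | App _ t1 t2 => Nat.max (term_bound t1) (term_bound t2)
  end.

Fixpoint formula_bound (p : formula arith_sym) : nat :=
  match p with
  | FEq t1 t2 => Nat.max (term_bound t1) (term_bound t2)
  | FNot q => formula_bound q
  | FAnd q r | FOr q r | FImp q r => Nat.max (formula_bound q) (formula_bound r)
  | FEx n q | FAll n q => Nat.max (S n) (formula_bound q)
  end.

Definition OpF (pa pb : nat) (s : arith_sym) (x y z c : nat) : formula group_sym :=
  match s with
  | APlus => FEq (gv z) (gv x ** gv y)
  | ATimes => MulF pa pb x y z c
  end.

Lemma OpF_sat (pa pb : nat) (w : nat -> G) (s : arith_sym) (x y z c m n : nat) :
  Good pa pb w -> (pa < c)%nat -> (pb < c)%nat -> (x < c)%nat -> (y < c)%nat ->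
  (z < c)%nat -> w x = apow m -> w y = apow n ->
  sat ZwrZ w (OpF pa pb s x y z c) <-> w z = apow (interp NatArith s m n).
Proof.
  intros Hg H1 H2 H3 H4 H5 Ex Ey; destruct s; [|apply MulF_sat; assumption].
  cbn [OpF sat eval interp ZwrZ NatArith]; rewrite Ex, Ey, apow_mul; reflexivity.
Qed.

Fixpoint TermF (pa pb off : nat) (t : term arith_sym) (y f : nat) : formula group_sym :=
  match t with
  | Var i => FEq (gv y) (gv (off + i))
  | App s t1 t2 =>
      FEx f (FEx (f + 1) (FAnd (TermF pa pb off t1 f (f + 2))
        (FAnd (TermF pa pb off t2 (f + 1) (f + 2)) (OpF pa pb s f (f + 1) y (f + 2)))))
  end.

Definition represents (off B : nat) (w : nat -> G) (v : nat -> nat) : Prop :=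
  forall i, (i < B)%nat -> w (off + i)%nat = apow (v i).

Lemma represents_upd_aux (off B f : nat) (w : nat -> G) (v : nat -> nat) (x : G) :
  represents off B w v -> (off + B <= f)%nat -> represents off B (upd w f x) v.
Proof. intros Hr Hf i Hi; rewrite upd_other by lia; apply Hr, Hi. Qed.

Lemma represents_upd_var (off B n k : nat) (w : nat -> G) (v : nat -> nat) :
  represents off B w v -> represents off B (upd w (off + n) (apow k)) (upd v n k).
Proof.
  intros Hr i Hi; unfold upd; destruct (Nat.eqb_spec i n), (Nat.eqb_spec (off + i) (off + n));
    [reflexivity | lia | lia | apply Hr, Hi].
Qed.

Lemma TermF_sat (pa pb off B : nat) (t : term arith_sym) :
  forall (w : nat -> G) (v : nat -> nat) (y f : nat), Good pa pb w ->
  (pa < f)%nat -> (pb < f)%nat -> (y < f)%nat -> (off + B <= f)%nat ->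
  (term_bound t <= B)%nat -> represents off B w v ->
  sat ZwrZ w (TermF pa pb off t y f) <-> w y = apow (eval NatArith v t).
Proof.
  induction t as [i|s t1 IH1 t2 IH2]; intros w v y f Hg H1 H2 H3 Hf Ht Hr.
  - cbn in Ht |- *; rewrite Hr by lia; reflexivity.
  - cbn [term_bound] in Ht; cbn [TermF sat eval].
    assert (Hw : forall g1 g2, Good pa pb (upd (upd w f g1) (f + 1) g2) /\
               represents off B (upd (upd w f g1) (f + 1) g2) v).
    { intros g1 g2; pose proof Hg as [Ha Hb]; split; [good|].
      apply represents_upd_aux; [apply represents_upd_aux|]; assumption || lia. }
    split.
    + intros [g1 [g2 [T1 [T2 Op]]]]; destruct (Hw g1 g2) as [Hg' Hr'].
      rewrite (IH1 _ v) in T1 by (assumption || lia).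
      rewrite (IH2 _ v) in T2 by (assumption || lia).
      rewrite OpF_sat in Op by (eassumption || lia); simpl_upd_in Op; exact Op.
    + intros E; exists (apow (eval NatArith v t1)), (apow (eval NatArith v t2)).
      destruct (Hw (apow (eval NatArith v t1)) (apow (eval NatArith v t2))) as [Hg' Hr'].
      rewrite (IH1 _ v), (IH2 _ v), OpF_sat by (assumption || lia || simpl_upd; reflexivity).
      simpl_upd; auto.
Qed.

Fixpoint FormF (pa pb off F : nat) (p : formula arith_sym) : formula group_sym :=
  match p with
  | FEq t1 t2 => FEx F (FAnd (TermF pa pb off t1 F (F + 1)) (TermF pa pb off t2 F (F + 1)))
  | FNot q => FNot (FormF pa pb off F q)
  | FAnd q r => FAnd (FormF pa pb off F q) (FormF pa pb off F r)
  | FOr q r => FOr (FormF pa pb off F q) (FormF pa pb off F r)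
  | FImp q r => FImp (FormF pa pb off F q) (FormF pa pb off F r)
  | FEx n q => FEx (off + n) (FAnd (NatPowF pa pb (off + n) F) (FormF pa pb off F q))
  | FAll n q => FAll (off + n) (FImp (NatPowF pa pb (off + n) F) (FormF pa pb off F q))
  end.

Lemma relativised_quantifiers (P : G -> Prop) (Q : nat -> Prop) :
  (forall k, P (apow k) <-> Q k) ->
  ((exists x, IsNatPow x /\ P x) <-> exists k, Q k) /\
  ((forall x, IsNatPow x -> P x) <-> forall k, Q k).
Proof.
  intros HPQ; split; split.
  - intros [x [[k ->] Px]]; exists k; apply HPQ, Px.
  - intros [k Qk]; exists (apow k); split; [exists k; reflexivity | apply HPQ, Qk].
  - intros H k; apply HPQ, H; exists k; reflexivity.
  - intros H x [k ->]; apply HPQ, H.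
Qed.

Lemma quantifier_step (pa pb off B F n : nat) (q : formula arith_sym) :
  (pa < off)%nat -> (pb < off)%nat -> (off + B <= F)%nat -> (n < B)%nat ->
  forall (w : nat -> G) (v : nat -> nat), Good pa pb w -> represents off B w v ->
  (forall (w : nat -> G) (v : nat -> nat), Good pa pb w -> represents off B w v ->
     sat ZwrZ w (FormF pa pb off F q) <-> sat NatArith v q) ->
  (forall x, sat ZwrZ (upd w (off + n) x) (NatPowF pa pb (off + n) F) <-> IsNatPow x) /\
  (forall k, sat ZwrZ (upd w (off + n) (apow k)) (FormF pa pb off F q) <->
             sat NatArith (upd v n k) q).
Proof.
  intros Ha Hb HF Hn w v Hg Hr IH; pose proof Hg as [Ha' Hb']; split.
  - intros x; rewrite NatPowF_sat by side; rewrite upd_same; reflexivity.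
  - intros k; apply IH; [good | apply represents_upd_var, Hr].
Qed.

Lemma FormF_sat (pa pb off B F : nat) (p : formula arith_sym) :
  (pa < off)%nat -> (pb < off)%nat -> (off + B <= F)%nat -> (formula_bound p <= B)%nat ->
  forall (w : nat -> G) (v : nat -> nat), Good pa pb w -> represents off B w v ->
  sat ZwrZ w (FormF pa pb off F p) <-> sat NatArith v p.
Proof.
  intros Ha Hb HF; induction p as [t1 t2|q IH|q IHq r IHr|q IHq r IHr|q IHq r IHr|n q IH|n q IH];
    cbn [formula_bound FormF sat]; intros Hp w v Hg Hr.
  - assert (HT : forall g t, (term_bound t <= B)%nat ->
              sat ZwrZ (upd w F g) (TermF pa pb off t F (F + 1)) <->
              g = apow (eval NatArith v t)).
    { intros g t Ht; pose proof Hg as [Ha' Hb'].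
      rewrite (TermF_sat pa pb off B t _ v)
        by first [good | lia | apply represents_upd_aux; [exact Hr | lia]].
      rewrite upd_same; reflexivity. }
    split.
    + intros [g [T1 T2]]; rewrite HT in T1, T2 by lia; apply apow_inj; congruence.
    + intros E; exists (apow (eval NatArith v t1)); rewrite !HT by lia.
      split; [reflexivity | congruence].
  - rewrite (IH Hp w v Hg Hr); reflexivity.
  - rewrite (IHq ltac:(lia) w v Hg Hr), (IHr ltac:(lia) w v Hg Hr); reflexivity.
  - rewrite (IHq ltac:(lia) w v Hg Hr), (IHr ltac:(lia) w v Hg Hr); reflexivity.
  - rewrite (IHq ltac:(lia) w v Hg Hr), (IHr ltac:(lia) w v Hg Hr); reflexivity.
  - destruct (quantifier_step pa pb off B F n q Ha Hb HF ltac:(lia) w v Hg Hr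
      (IH ltac:(lia))) as [HN HQ]; setoid_rewrite HN; apply relativised_quantifiers, HQ.
  - destruct (quantifier_step pa pb off B F n q Ha Hb HF ltac:(lia) w v Hg Hr
      (IH ltac:(lia))) as [HN HQ]; setoid_rewrite HN; apply relativised_quantifiers, HQ.
Qed.

Fixpoint conj_upto (n : nat) (f : nat -> formula group_sym) : formula group_sym :=
  match n with
  | O => FEq (gv 0) (gv 0)
  | S n => FAnd (conj_upto n f) (f n)
  end.

Lemma conj_upto_sat (w : nat -> G) (n : nat) (f : nat -> formula group_sym) :
  sat ZwrZ w (conj_upto n f) <-> forall i, (i < n)%nat -> sat ZwrZ w (f i).
Proof.
  induction n as [|n IH]; cbn [conj_upto sat].
  - split; [intros _ i Hi; lia | reflexivity].
  - rewrite IH; split; [intros [H Hn] i Hi; destruct (Nat.eq_dec i n) as [->|]; auto with arith|].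
    + apply H; lia.
    + intros H; split; [intros i Hi|]; apply H; lia.
Qed.

Fixpoint ex_block (off n : nat) (body : formula group_sym) : formula group_sym :=
  match n with
  | O => body
  | S n => FEx (off + n) (ex_block off n body)
  end.

Lemma ex_block_sat (w : nat -> G) (off n : nat) (body : formula group_sym) :
  sat ZwrZ w (ex_block off n body) <->
  exists w', (forall j, (j < off \/ off + n <= j)%nat -> w' j = w j) /\ sat ZwrZ w' body.
Proof.
  revert w; induction n as [|n IH]; intros w; cbn [ex_block sat].
  - split; [intros H; exists w; auto|].
    intros [w' [E H]]; replace w with w'; [exact H|].
    apply functional_extensionality; intros j; apply E; lia.
  - setoid_rewrite IH; split.
    + intros [x [w' [E H]]]; exists w'; split; [|exact H].
      intros j Hj; rewrite E, upd_other by lia; reflexivity.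
    + intros [w' [E H]]; exists (w' (off + n)%nat), w'; split; [|exact H].
      intros j Hj; unfold upd; destruct (Nat.eqb_spec j (off + n)) as [->|]; [reflexivity|].
      apply E; lia.
Qed.

Definition exponent (x : G) : nat := Z.to_nat (snd x).

Lemma IsNatPow_exponent (x : G) : IsNatPow x -> x = apow (exponent x).
Proof. intros [n ->]; unfold exponent, apow, zpow; cbn; rewrite Nat2Z.id; reflexivity. Qed.

Lemma exponent_apow (n : nat) : exponent (apow n) = n.
Proof. apply Nat2Z.id. Qed.

(** The block variables [off + i], [i < B], hold the tuple (variables
    [0..k-1]) for [i < k] and nonnegative powers of [a] beyond. *)
Definition block_formula (k off B F : nat) : formula group_sym :=
  conj_upto B (fun i => if (i <? k)%nat then FEq (gv (off + i)) (gv i)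
                        else NatPowF k (S k) (off + i) F).

(** The formula defining the preimage of the relation defined by [p] under
    [f^k]: the tuple lives in variables [0..k-1], [a] and [b] in [k] and
    [k+1]; a block of [B] variables from [k+2] on copies the tuple and
    carries all the variables of the translated formula. *)
Definition preimage_formula (k : nat) (p : formula arith_sym) : formula group_sym :=
  let off := (k + 2)%nat in
  let B := Nat.max k (formula_bound p) in
  let F := (off + B)%nat in
  FAnd (conj_upto k (fun i => NatPowF k (S k) i F))
    (ex_block off B (FAnd (block_formula k off B F) (FormF k (S k) off F p))).

(** The truth of [p] depends only on the variables [0..k-1]; this holds for
    the formulas defining relations [X] of arity [k] in [definable0]. *)
Definition depends_on_first (k : nat) (p : formula arith_sym) : Prop :=
  forall v v' : nat -> nat, (forall i, (i < k)%nat -> v i = v' i) ->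
  sat NatArith v p <-> sat NatArith v' p.

Section PreimageFormula.

Variables (k : nat) (p : formula arith_sym) (w : nat -> G).
Hypotheses (Hp : depends_on_first k p) (Hg : Good k (S k) w).

Let off : nat := (k + 2)%nat.
Let B : nat := Nat.max k (formula_bound p).
Let F : nat := (off + B)%nat.

Lemma NatPowF_sat_domain (w' : nat -> G) (x : nat) : Good k (S k) w' -> (x < F)%nat ->
  sat ZwrZ w' (NatPowF k (S k) x F) <-> IsNatPow (w' x).
Proof. intros Hg'; apply NatPowF_sat; [exact Hg'|unfold F, off; lia..]. Qed.

Lemma preimage_formula_sound (w' : nat -> G) :
  (forall i, (i < k)%nat -> IsNatPow (w i)) ->
  (forall j, (j < off \/ off + B <= j)%nat -> w' j = w j) ->
  sat ZwrZ w' (block_formula k off B F) -> sat ZwrZ w' (FormF k (S k) off F p) ->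
  sat NatArith (fun i => exponent (w i)) p.
Proof.
  intros Hdom Ew' Hblock Hform; unfold block_formula in Hblock.
  rewrite conj_upto_sat in Hblock.
  assert (Hg' : Good k (S k) w')
    by (destruct Hg; split; rewrite Ew' by (unfold off; lia); assumption).
  assert (Hcopy : forall i, (i < k)%nat -> w' (off + i)%nat = w i).
  { intros i Hi; specialize (Hblock i ltac:(unfold B; lia)).
    rewrite (proj2 (Nat.ltb_lt i k) Hi) in Hblock; cbn in Hblock.
    rewrite Hblock; apply Ew'; unfold off; lia. }
  assert (Hnat : forall i, (i < B)%nat -> IsNatPow (w' (off + i)%nat)).
  { intros i Hi; destruct (Nat.ltb_spec i k) as [Hik|Hik].
    - rewrite Hcopy by exact Hik; apply Hdom, Hik.
    - specialize (Hblock i Hi); rewrite (proj2 (Nat.ltb_ge i k) Hik) in Hblock.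
      rewrite NatPowF_sat_domain in Hblock by (assumption || unfold F; lia); exact Hblock. }
  rewrite (FormF_sat k (S k) off B F p) with (v := fun i => exponent (w' (off + i)%nat)) in Hform;
    [| unfold off, F, B; lia.. | exact Hg' | intros i Hi; apply IsNatPow_exponent, Hnat, Hi].
  revert Hform; apply Hp; intros i Hi; rewrite Hcopy by exact Hi; reflexivity.
Qed.

Definition witness_block (j : nat) : G :=
  if (off <=? j)%nat && (j <? off + B)%nat then
    (if (j - off <? k)%nat then w (j - off)%nat else apow 0)
  else w j.

Lemma witness_block_in (i : nat) : (i < B)%nat ->
  witness_block (off + i) = if (i <? k)%nat then w i else apow 0.
Proof.
  intros Hi; unfold witness_block.
  rewrite (proj2 (Nat.leb_le off (off + i)) ltac:(lia)),
    (proj2 (Nat.ltb_lt (off + i) (off + B)) ltac:(lia)), Nat.add_sub_swap, Nat.sub_diag by lia.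
  reflexivity.
Qed.

Lemma witness_block_out (j : nat) : (j < off \/ off + B <= j)%nat -> witness_block j = w j.
Proof.
  intros Hj; unfold witness_block.
  destruct (Nat.leb_spec off j), (Nat.ltb_spec j (off + B)); cbn; [lia|reflexivity..].
Qed.

Lemma preimage_formula_complete :
  (forall i, (i < k)%nat -> IsNatPow (w i)) -> sat NatArith (fun i => exponent (w i)) p ->
  sat ZwrZ witness_block (block_formula k off B F) /\
  sat ZwrZ witness_block (FormF k (S k) off F p).
Proof.
  intros Hdom Hsat.
  assert (Hg' : Good k (S k) witness_block)
    by (destruct Hg; split; rewrite witness_block_out by (unfold off; lia); assumption).
  assert (Hnat : forall i, (i < B)%nat -> IsNatPow (witness_block (off + i))).
  { intros i Hi; rewrite witness_block_in by exact Hi.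
    destruct (Nat.ltb_spec i k); [apply Hdom; assumption | exists 0%nat; reflexivity]. }
  unfold block_formula; rewrite conj_upto_sat; split.
  - intros i Hi; destruct (Nat.ltb_spec i k) as [Hik|Hik].
    + cbn [sat eval]; rewrite witness_block_in, witness_block_out by (unfold off; lia).
      rewrite (proj2 (Nat.ltb_lt i k) Hik); reflexivity.
    + rewrite NatPowF_sat_domain by (assumption || unfold F; lia); apply Hnat, Hi.
  - rewrite (FormF_sat k (S k) off B F p) with
      (v := fun i => exponent (witness_block (off + i)%nat));
      [| unfold off, F, B; lia.. | exact Hg' | intros i Hi; apply IsNatPow_exponent, Hnat, Hi].
    revert Hsat; apply Hp; intros i Hi.
    rewrite witness_block_in by (unfold B; lia); rewrite (proj2 (Nat.ltb_lt i k) Hi).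
    reflexivity.
Qed.

Lemma preimage_formula_sat :
  sat ZwrZ w (preimage_formula k p) <->
  (forall i, (i < k)%nat -> IsNatPow (w i)) /\ sat NatArith (fun i => exponent (w i)) p.
Proof.
  change (preimage_formula k p) with (FAnd (conj_upto k (fun i => NatPowF k (S k) i F))
    (ex_block off B (FAnd (block_formula k off B F) (FormF k (S k) off F p)))).
  cbn [sat]; rewrite conj_upto_sat, ex_block_sat.
  assert (Hdom : (forall i, (i < k)%nat -> sat ZwrZ w (NatPowF k (S k) i F))
                 <-> forall i, (i < k)%nat -> IsNatPow (w i)).
  { split; intros H i Hi; specialize (H i Hi);
      rewrite NatPowF_sat_domain in * by (assumption || unfold F, off; lia); exact H. }
  rewrite Hdom; split.
  - intros [Hd [w' [Ew' [Hblock Hform]]]]; split; [exact Hd|].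
    exact (preimage_formula_sound w' Hd Ew' Hblock Hform).
  - intros [Hd Hsat]; split; [exact Hd|]; exists witness_block; split.
    + apply witness_block_out.
    + apply preimage_formula_complete; assumption.
Qed.

End PreimageFormula.

Lemma dom_apow_single (x : G) : dom_apow [x] <-> IsNatPow x.
Proof.
  unfold dom_apow, IsNatPow; split; intros [n E]; exists n; rewrite wr_pow_a in *; congruence.
Qed.

Lemma block_single {A : Type} (v : nat -> A) (k i : nat) :
  (i < k)%nat -> block 1 i (map v (seq 0 k)) = [v i].
Proof.
  intros Hi; unfold block; rewrite Nat.mul_1_r.
  replace k with (i + S (k - S i))%nat by lia.
  rewrite seq_app, map_app, skipn_app, length_map, length_seq, Nat.sub_diag, skipn_all2
    by (rewrite length_map, length_seq; lia).
  reflexivity.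
Qed.

Lemma definable_depends_on_first (k : nat) (X : list nat -> Prop) (p : formula arith_sym) :
  (forall v, X (map v (seq 0 k)) <-> sat NatArith v p) -> depends_on_first k p.
Proof.
  intros HX v v' E; rewrite <- !HX; erewrite map_ext_in; [reflexivity|].
  intros i Hi; apply in_seq in Hi; apply E; lia.
Qed.

Theorem lemma5p1 : interpretation NatArith ZwrZ 1 dom_apow f_apow.
Proof.
  split; [|split].
  - intros x [n ->]; reflexivity.
  - intros m; exists [apow m]; split; [apply dom_apow_single; exists m; reflexivity|].
    apply exponent_apow.
  - intros k X [p HX]; exists (preimage_formula k p), [wr_a; wr_b]; intros w Hw.
    rewrite Nat.mul_1_l in *; cbn in Hw; injection Hw as Ha Hb.
    assert (Hg : Good k (S k) w) by (split; assumption).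
    rewrite (preimage_formula_sat k p w (definable_depends_on_first k X p HX) Hg).
    assert (Hval : map (fun i => f_apow (block 1 i (map w (seq 0 k)))) (seq 0 k)
                   = map (fun i => exponent (w i)) (seq 0 k)).
    { apply map_ext_in; intros i Hi; apply in_seq in Hi.
      rewrite block_single by lia; reflexivity. }
    rewrite <- HX; cbn [carrier NatArith]; rewrite Hval.
    split; intros [Hdom Hx]; split; try exact Hx; intros i Hi; specialize (Hdom i Hi);
      rewrite block_single, dom_apow_single in * by exact Hi; exact Hdom.
Qed.
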